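(* Let $S_1\subseteq S_2$ be strongly $E^*$-unitary inverse semigroups with zero with $S_1\subseteq_cS_2$, let $\varphi:S_2\setminus\{0\}\to G$ be a grading, and let $E_{k,g}$, $\phi_{k,g}$ and the induced partial actions of $G$ on $\mathcal T_c(E_k)$ be as in the context. Suppose that for all $x,y\in E_1$ and $s\in S_2$ there exists $s'\in S_1$ with $xsy\le s'$. Then for all $g\in G$, $x,y\in E_1$ and $a\in E_{2,g^{-1}}$ there exists $Z\in\mathcal T_c(E_{1,g})$ with $V_x\cap\tilde\phi_{2,g}(V_y\cap V_a)\le Z$.
   Context: For an inverse semigroup $S$ with zero, $E$ is its semilattice of idempotents; the natural order on $S$ is $x\le y\iff x=ey$ for some $e\in E$. $S$ is strongly $E^*$-unitary via $\varphi:S\setminus\{0\}\to G$ if $\varphi^{-1}(1_G)=E\setminus\{0\}$ and $\varphi(ab)=\varphi(a)\varphi(b)$ whenever $ab\ne0$; a grading on $S_2$ restricts to one on $S_1$. For a semilattice $P$ with $0$: a cover of $x$ is a finite $\{x_i\}$ with $x_i\le x$ meeting nontrivially every nonzero $y\le x$; tight filters contain a member of each cover of each of their elements; $V_x$ is the set of tight filters containing $x$, and $\mathcal T_c(P)$ is the generalized Boolean algebra of compact open subsets of the tight spectrum. $S_1\subseteq_cS_2$ means $S_1$ is an inverse subsemigroup and every cover in $E_1$ is a cover in $E_2$; then $V^{E_1}_x\mapsto V^{E_2}_x$ identifies $\mathcal T_c(E_1)\subseteq\mathcal T_c(E_2)$. For $k=1,2$: $E_{k,g}=\{x\in E_k:x\le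 ss^*\text{ for some }s\in S_k,\ \varphi(s)=g\}$, $\phi_{k,g}(x)=sxs^*$ for $x\in E_{k,g^{-1}}$ (any $s\in S_k$ with $\varphi(s)=g$, $x\le s^*s$); $\mathcal T_c(E_{k,g})$ denotes the ideal of $\mathcal T_c(E_k)$ generated by $\{V_x:x\in E_{k,g}\}$, and $\tilde\phi_{k,g}:\mathcal T_c(E_{k,g^{-1}})\to\mathcal T_c(E_{k,g})$ is the isomorphism generated by $V_x\mapsto V_{\phi_{k,g}(x)}$. *)

From Stdlib Require Import List.
Import ListNotations.
Set Implicit Arguments.

Record ISG := {
  isg_car :> Type;
  smul : isg_car -> isg_car -> isg_car;
  szero : isg_car;
  sinv : isg_car -> isg_car;
  smulA : forall a b c, smul a (smul b c) = smul (smul a b) c;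
  smul0l : forall a, smul szero a = szero;
  smul0r : forall a, smul a szero = szero;
  sinv_inv1 : forall a, smul (smul a (sinv a)) a = a;
  sinv_inv2 : forall a, smul (smul (sinv a) a) (sinv a) = sinv a;
  sinv_uniq : forall a b, smul (smul a b) a = a -> smul (smul b a) b = b -> b = sinv a
}.
Arguments smul {_}. Arguments szero {_}. Arguments sinv {_}.

Record Group := {
  grp_car :> Type;
  gmul : grp_car -> grp_car -> grp_car;
  gone : grp_car;
  ginv : grp_car -> grp_car;
  gmulA : forall a b c, gmul a (gmul b c) = gmul (gmul a b) c;
  gmul1l : forall a, gmul gone a = a;
  gmul1r : forall a, gmul a gone = a;
  gmulVl : forall a, gmul (ginv a) a = gone;
  gmulVr : forall a, gmul a (ginv a) = gone
}.
Arguments gmul {_}. Arguments gone {_}. Arguments ginv {_}.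

Definition subsemi {S : ISG} (P : S -> Prop) : Prop :=
  P szero /\ (forall a b, P a -> P b -> P (smul a b)) /\ (forall a, P a -> P (sinv a)).

Definition full (S : ISG) : S -> Prop := fun _ => True.

Definition Idem {S : ISG} (P : S -> Prop) : S -> Prop := fun x => P x /\ smul x x = x.

Definition nle {S : ISG} (x y : S) : Prop :=
  exists e, Idem (full S) e /\ x = smul e y.

(** Strongly E*-unitary grading (phi only matters on S \ {0}) *)
Definition grading {S : ISG} {G : Group} (phi : S -> G) : Prop :=
  (forall s, s <> szero -> (phi s = gone <-> smul s s = s)) /\
  (forall a b, smul a b <> szero -> phi (smul a b) = gmul (phi a) (phi b)).

(** * Semilattice E (a predicate on S; meet = product) *)
Definition is_cover {S : ISG} (E : S -> Prop) (x : S) (zs : list S) : Prop :=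
  Forall (fun z => E z /\ nle z x) zs /\
  (forall y, E y -> y <> szero -> nle y x -> Exists (fun z => smul y z <> szero) zs).

Definition is_filter {S : ISG} (E : S -> Prop) (F : S -> Prop) : Prop :=
  (forall x, F x -> E x) /\ (exists x, F x) /\ ~ F szero /\
  (forall x y, F x -> E y -> nle x y -> F y) /\
  (forall x y, F x -> F y -> F (smul x y)).

Definition tight {S : ISG} (E : S -> Prop) (F : S -> Prop) : Prop :=
  is_filter E F /\ (forall x zs, F x -> is_cover E x zs -> Exists F zs).

Definition fsets (S : ISG) := (S -> Prop) -> Prop.
Definition empty (S : ISG) : fsets S := fun _ => False.
Definition union {S : ISG} (A B : fsets S) : fsets S := fun F => A F \/ B F.
Definition inter {S : ISG} (A B : fsets S) : fsets S := fun F => A F /\ B F.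
Definition diff {S : ISG} (A B : fsets S) : fsets S := fun F => A F /\ ~ B F.
Definition incl {S : ISG} (A B : fsets S) : Prop := forall F, A F -> B F.

Definition V {S : ISG} (E : S -> Prop) (x : S) : fsets S := fun F => tight E F /\ F x.

(** Topology of the tight spectrum (subspace of {0,1}^E): basic open sets *)
Definition basic {S : ISG} (E : S -> Prop) (xs ys : list S) : fsets S :=
  fun F => tight E F /\ Forall F xs /\ Forall (fun y => ~ F y) ys.

Definition is_open {S : ISG} (E : S -> Prop) (A : fsets S) : Prop :=
  (forall F, A F -> tight E F) /\
  (forall F, A F -> exists xs ys, basic E xs ys F /\ incl (basic E xs ys) A).

Definition is_compact {S : ISG} (E : S -> Prop) (A : fsets S) : Prop :=
  forall (I : Type) (U : I -> fsets S), (forall i, is_open E (U i)) ->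
    (forall F, A F -> exists i, U i F) ->
    exists l : list I, forall F, A F -> exists i, In i l /\ U i F.

Definition Tc {S : ISG} (E : S -> Prop) (A : fsets S) : Prop :=
  is_open E A /\ is_compact E A.

Definition is_ideal {S : ISG} (E : S -> Prop) (I : fsets S -> Prop) : Prop :=
  I (empty S) /\ (forall A, I A -> Tc E A) /\
  (forall A B, I A -> I B -> I (union A B)) /\
  (forall A B, Tc E A -> I B -> incl A B -> I A).

Definition gen_ideal {S : ISG} (E : S -> Prop) (Gen : fsets S -> Prop) (A : fsets S) : Prop :=
  Tc E A /\ forall I, is_ideal E I -> (forall B, Gen B -> I B) -> I A.

Definition Eg {S : ISG} {G : Group} (P : S -> Prop) (phi : S -> G) (g : G) (x : S) : Prop :=
  Idem P x /\ exists s, P s /\ s <> szero /\ phi s = g /\ nle x (smul s (sinv s)).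

Definition Tcg {S : ISG} {G : Group} (P : S -> Prop) (phi : S -> G) (g : G) : fsets S -> Prop :=
  gen_ideal (Idem P) (fun B => exists x, Eg P phi g x /\ B = V (Idem P) x).

Definition bhom {S : ISG} (D C : fsets S -> Prop) (h : fsets S -> fsets S) : Prop :=
  (forall A, D A -> C (h A)) /\
  (forall A B, D A -> D B ->
     h (union A B) = union (h A) (h B) /\
     h (inter A B) = inter (h A) (h B) /\
     h (diff A B) = diff (h A) (h B)).

Definition biso {S : ISG} (D C : fsets S -> Prop) (h : fsets S -> fsets S) : Prop :=
  bhom D C h /\ (forall A B, D A -> D B -> h A = h B -> A = B) /\
  (forall B, C B -> exists A, D A /\ h A = B).

(** h is the isomorphism tilde-phi_{2,g} : T_c(E_{2,g^-1}) -> T_c(E_{2,g})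
    generated by V_x |-> V_{s x s^*} *)
Definition is_phitilde {S : ISG} {G : Group} (phi : S -> G) (g : G) (h : fsets S -> fsets S) : Prop :=
  biso (Tcg (full S) phi (ginv g)) (Tcg (full S) phi g) h /\
  (forall x s, Idem (full S) x -> s <> szero -> phi s = g -> nle x (smul (sinv s) s) ->
     h (V (Idem (full S)) x) = V (Idem (full S)) (smul (smul s x) (sinv s))).

(** S1 <=_c S2 (S2 = all of S) *)
Definition cover_sub {S : ISG} (S1 : S -> Prop) : Prop :=
  subsemi S1 /\
  (forall x zs, Idem S1 x -> is_cover (Idem S1) x zs -> is_cover (Idem (full S)) x zs).

(** the identification T_c(E_1) -> T_c(E_2) generated by V^{E1}_x |-> V^{E2}_x *)
Definition is_iota {S : ISG} (S1 : S -> Prop) (iota : fsets S -> fsets S) : Prop :=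
  bhom (Tc (Idem S1)) (Tc (Idem (full S))) iota /\
  (forall A B, Tc (Idem S1) A -> Tc (Idem S1) B -> iota A = iota B -> A = B) /\
  (forall x, Idem S1 x -> iota (V (Idem S1) x) = V (Idem (full S)) x).

(* Intersections of basic sets are basic, [V_y ∩ V_a = V_(ya)], and
   [phi~_(2,g)] sends [V_(ya)] to [V_p] with [p = s (ya) s^-1], where
   [s = t^-1] for a [t] witnessing [a ∈ E_(2,g^-1)], so that [phi s = g].
   Hence the left-hand side is [V_(xp)] with [xp = (x s y)(a s^-1)].  By
   hypothesis [x s y <= s'] for some [s' ∈ S_1]; if [x s y = 0] the set is
   empty, and otherwise the grading gives [phi s' = phi s = g], so
   [s' s'^-1 ∈ E_(1,g)] and [xp <= s' s'^-1], i.e. [Z = V_(s' s'^-1)] works.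
   That this [Z] is compact is the one topological input: the tight filters
   containing [z] are the points of the Cantor cube [{0,1}^S] avoiding a
   family of finite patterns, hence form a closed subset. *)

From Stdlib Require Import List.
From HB Require Import structures.
From mathcomp Require Import all_boot all_classical topology.

Set Implicit Arguments.
Unset Strict Implicit.
Unset Printing Implicit Defensive.

Local Open Scope classical_set_scope.

Section InverseSemigroup.
Variable S : ISG.
Local Notation "a ** b" := (smul a b) (at level 40, left associativity).

Lemma sinvK (a : S) : sinv (sinv a) = a.
Proof.
by symmetry; apply: sinv_uniq; [apply: sinv_inv2 | apply: sinv_inv1].
Qed.

Lemma sinv_idem (e : S) : e ** e = e -> sinv e = e.
Proof. by move=> ee; symmetry; apply: sinv_uniq; rewrite ee. Qed.

Lemma idemKl (e w : S) : e ** e = e -> e ** (e ** w) = e ** w.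
Proof. by move=> ee; rewrite smulA ee. Qed.

Lemma mul_sinv_idem (a : S) : (a ** sinv a) ** (a ** sinv a) = a ** sinv a.
Proof. by rewrite smulA sinv_inv1. Qed.

Lemma sinv_mul_idem (a : S) : (sinv a ** a) ** (sinv a ** a) = sinv a ** a.
Proof. by rewrite smulA sinv_inv2. Qed.

Lemma Idem_range (P : S -> Prop) (s : S) :
  subsemi P -> P s -> Idem P (s ** sinv s).
Proof.
move=> [_ [Pmul Pinv]] Ps.
by split; [apply: Pmul; last apply: Pinv | apply: mul_sinv_idem].
Qed.

(* The inverse [x] of [e f] is idempotent and equals [f x e]; being its own
   inverse, it coincides with [e f]. *)
Lemma idemM (e f : S) :
  e ** e = e -> f ** f = f -> (e ** f) ** (e ** f) = e ** f.
Proof.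
move=> ee ff; set x := sinv (e ** f).
have fxe : f ** x ** e = x.
  apply: sinv_uniq.
  - rewrite -[RHS](sinv_inv1 _ (e ** f)) -!smulA.
    by rewrite !(idemKl _ ff) !(idemKl _ ee).
  - transitivity (f ** (x ** (e ** f) ** x) ** e); last by rewrite sinv_inv2.
    by rewrite -!smulA !(idemKl _ ff) !(idemKl _ ee).
have xx : x ** x = x.
  transitivity (f ** (x ** (e ** f) ** x) ** e); last by rewrite sinv_inv2.
  by rewrite -{1 2}fxe -!smulA.
by rewrite -[e ** f]sinvK -/x sinv_idem.
Qed.

Lemma idemC (e f : S) : e ** e = e -> f ** f = f -> e ** f = f ** e.
Proof.
move=> ee ff; have ef := idemM ee ff; have fe := idemM ff ee.
suff -> : f ** e = sinv (e ** f) by rewrite sinv_idem.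
apply: sinv_uniq.
- by rewrite -[RHS]ef -!smulA (idemKl _ ff) (idemKl _ ee).
- by rewrite -[RHS]fe -!smulA (idemKl _ ee) (idemKl _ ff).
Qed.

Lemma idem_conj (s f : S) :
  f ** f = f -> (s ** f ** sinv s) ** (s ** f ** sinv s) = s ** f ** sinv s.
Proof.
move=> ff; transitivity (s ** (f ** (sinv s ** s)) ** f ** sinv s).
  by rewrite -!smulA.
by rewrite (idemC ff (sinv_mul_idem s)) -!smulA (idemKl _ ff) !smulA sinv_inv1.
Qed.

Lemma idem_nle (f e : S) : f ** f = f -> e ** e = e -> e ** f = f -> nle f e.
Proof. by move=> ff ee ef; exists f; split; last by rewrite -(idemC ee ff). Qed.

Lemma range_idem_mul (e s : S) :
  e ** e = e -> (s ** sinv s) ** (e ** s) = e ** s.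
Proof.
move=> ee.
have -> : e ** s = e ** (s ** sinv s) ** s by rewrite -smulA sinv_inv1.
by rewrite (idemC ee (mul_sinv_idem s)) smulA (idemKl _ (mul_sinv_idem s)).
Qed.

Lemma nle_range (u s w : S) :
  nle u s -> (u ** w) ** (u ** w) = u ** w -> nle (u ** w) (s ** sinv s).
Proof.
move=> [e [[_ ee] ->]] uw_idem; apply: idem_nle uw_idem (mul_sinv_idem s) _.
by rewrite smulA range_idem_mul.
Qed.

Lemma nle_idem_mull (e s : S) : e ** e = e -> nle (e ** s) s.
Proof. by move=> ee; exists e. Qed.

Lemma nle_mull (e x z : S) : e ** e = e -> nle x z -> nle (e ** x) z.
Proof.
move=> ee [f [[_ ff] ->]]; exists (e ** f); split; last by rewrite smulA.
by split; last exact: idemM.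
Qed.

Lemma mul_neq0l (a b : S) : a ** b <> szero -> a <> szero.
Proof. by move=> ab0 a0; apply: ab0; rewrite a0 smul0l. Qed.

Lemma mul_neq0r (a b : S) : a ** b <> szero -> b <> szero.
Proof. by move=> ab0 b0; apply: ab0; rewrite b0 smul0r. Qed.

Lemma nle_neq0 (u s : S) : nle u s -> u <> szero -> s <> szero.
Proof. by move=> [e [_ ->]]; apply: mul_neq0r. Qed.

Lemma range_neq0 (s : S) : s <> szero -> s ** sinv s <> szero.
Proof. by move=> s0 r0; apply: s0; rewrite -(sinv_inv1 _ s) r0 smul0l. Qed.

Lemma sinv_neq0 (s : S) : s <> szero -> sinv s <> szero.
Proof.
by move=> s0 s'0; apply: s0; rewrite -(sinv_inv1 _ s) s'0 smul0r smul0l.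
Qed.

End InverseSemigroup.

Lemma ginv_unique (G : Group) (a b : G) : gmul a b = gone -> b = ginv a.
Proof. by move=> ab; rewrite -(gmul1l _ b) -(gmulVl _ a) -gmulA ab gmul1r. Qed.

Lemma ginvK (G : Group) (a : G) : ginv (ginv a) = a.
Proof. by symmetry; apply: ginv_unique; apply: gmulVl. Qed.

Section Grading.
Variables (S : ISG) (G : Group) (phi : S -> G).
Hypothesis phi_grading : grading phi.

Lemma grading_idem (e : S) : e <> szero -> smul e e = e -> phi e = gone.
Proof. by move=> e0 ee; apply/(proj1 phi_grading). Qed.

Lemma grading_sinv (s : S) : s <> szero -> phi (sinv s) = ginv (phi s).
Proof.
move=> s0; have r0 := range_neq0 s0.
apply: ginv_unique; rewrite -(proj2 phi_grading _ _ r0).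
exact: grading_idem (mul_sinv_idem s).
Qed.

Lemma grading_idem_mull (e s : S) :
  smul e e = e -> smul e s <> szero -> phi (smul e s) = phi s.
Proof.
move=> ee es0; rewrite (proj2 phi_grading _ _ es0).
by rewrite (grading_idem (mul_neq0l es0) ee) gmul1l.
Qed.

Lemma grading_idem_mulr (s e : S) :
  smul e e = e -> smul s e <> szero -> phi (smul s e) = phi s.
Proof.
move=> ee se0; rewrite (proj2 phi_grading _ _ se0).
by rewrite (grading_idem (mul_neq0r se0) ee) gmul1r.
Qed.

Lemma grading_nle (u s : S) : nle u s -> u <> szero -> phi s = phi u.
Proof. by move=> [e [[_ ee] ->]] es0; rewrite grading_idem_mull. Qed.

Lemma grading_idem_sandwich (x s y : S) : smul x x = x -> smul y y = y ->
  smul (smul x s) y <> szero -> phi (smul (smul x s) y) = phi s.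
Proof.
move=> xx yy xsy0; rewrite grading_idem_mulr // grading_idem_mull //.
exact: mul_neq0l xsy0.
Qed.

End Grading.

Section TightFilters.
Variables (S : ISG) (E : S -> Prop).

Lemma tight_mul (F : S -> Prop) x y : tight E F -> F x -> F y -> F (smul x y).
Proof. by move=> [[_ [_ [_ [_ Fmul]]]] _]; apply: Fmul. Qed.

Lemma tight_up (F : S -> Prop) x y : tight E F -> F x -> E y -> nle x y -> F y.
Proof. by move=> [[_ [_ [_ [Fup _]]]] _]; apply: Fup. Qed.

Lemma tight_neq0 (F : S -> Prop) : tight E F -> ~ F szero.
Proof. by move=> [[_ [_ []]]]. Qed.

Lemma V_szero : incl (V E szero) (empty S).
Proof. by move=> F [/tight_neq0]. Qed.

Lemma V_incl x y : E y -> nle x y -> incl (V E x) (V E y).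
Proof.
by move=> Ey xy F [Ft Fx]; split; last exact: tight_up Ft Fx Ey xy.
Qed.

End TightFilters.

Lemma V_mul (S : ISG) (P : S -> Prop) x y : Idem P x -> Idem P y ->
  inter (V (Idem P) x) (V (Idem P) y) = V (Idem P) (smul x y).
Proof.
move=> Px Py; apply: funext => F; apply: propext; split.
  by move=> [[Ft Fx] [_ Fy]]; split; last exact: tight_mul Ft Fx Fy.
move=> [Ft Fxy]; split; split => //.
  apply: (tight_up Ft Fxy Px).
  by rewrite (idemC (proj2 Px) (proj2 Py)); apply: nle_idem_mull; case: Py.
by apply: (tight_up Ft Fxy Py); apply: nle_idem_mull; case: Px.
Qed.

Lemma mem_In (T : eqType) (x : T) (s : seq T) : x \in s -> In x s.
Proof.
by elim: s => [|y s IH] //=; rewrite in_cons => /orP [/eqP ->|/IH]; auto.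
Qed.

(* [compact_cover] is only available for pointed spaces. *)
HB.instance Definition _ (T : Type) :=
  isPointed.Build (prod_topology (fun _ : T => bool)) (fun _ => false).

Section TightSpectrumCompact.
Variables (S : ISG) (E : S -> Prop).

Local Notation X := (prod_topology (fun _ : {classic S} => bool)).

Definition pattern (xs ys : seq S) : set X :=
  [set f | Forall (fun x => f x) xs /\ Forall (fun y => ~ f y) ys].

Lemma open_coord (x : S) (P : set bool) : open [set f : X | P (f x)].
Proof.
apply: (@open_comp _ _ (fun f : X => f x) P); last exact: discrete_open.
by move=> f _; apply: proj_continuous.
Qed.

Lemma pattern_consl x xs ys :
  pattern (x :: xs) ys = [set f : X | f x] `&` pattern xs ys.
Proof.
apply: funext => f; apply: propext; rewrite /pattern /setI /= Forall_cons_iff.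
by split=> [[[]]|[? []]].
Qed.

Lemma pattern_consr y xs ys :
  pattern xs (y :: ys) = [set f : X | ~ f y] `&` pattern xs ys.
Proof.
apply: funext => f; apply: propext; rewrite /pattern /setI /= Forall_cons_iff.
by split=> [[? []]|[? []]].
Qed.

Lemma pattern_open xs ys : open (pattern xs ys).
Proof.
elim: xs => [|x xs IHx].
  elim: ys => [|y ys IHy].
    rewrite (_ : pattern _ _ = setT); first exact: openT.
    by apply/seteqP; split.
  rewrite pattern_consr.
  exact: openI (open_coord y (fun b : bool => ~ b)) IHy.
by rewrite pattern_consl; exact: openI (open_coord x (fun b : bool => b)) IHx.
Qed.

Lemma closed_avoiding (R : seq S -> seq S -> Prop) :
  closed [set f : X | forall xs ys, R xs ys -> ~ pattern xs ys f].
Proof.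
rewrite (_ : [set f | _] =
  ~` \bigcup_(p in [set p | R p.1 p.2]) pattern p.1 p.2).
  by apply: open_closedC; apply: bigcup_open => p _; apply: pattern_open.
apply/seteqP; split => f.
  by move=> avoid [[xs ys] /= Rp pf]; exact: avoid Rp pf.
by move=> avoid xs ys Rp pf; apply: avoid; exists (xs, ys).
Qed.

(* No indicator function of a tight filter containing [z] is true on all of
   [xs] and false on all of [ys]; one constructor per axiom. *)
Inductive tight_forbidden (z : S) : seq S -> seq S -> Prop :=
| forbid_point : tight_forbidden z [::] [:: z]
| forbid_outside x : ~ E x -> tight_forbidden z [:: x] [::]
| forbid_zero : tight_forbidden z [:: szero] [::]
| forbid_up x y : E y -> nle x y -> tight_forbidden z [:: x] [:: y]
| forbid_mul x y : tight_forbidden z [:: x; y] [:: smul x y]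
| forbid_cover x zs : is_cover E x zs -> tight_forbidden z [:: x] zs.

Lemma tight_avoids (z : S) (f : X) : tight E (fun x => f x) -> f z ->
  forall xs ys, tight_forbidden z xs ys -> ~ pattern xs ys f.
Proof.
move=> [[fE [_ [f0 [fup fmul]]]] ftight] fz xs ys [] /=.
- by move=> [_ /Forall_cons_iff []].
- by move=> x nEx [/Forall_cons_iff [/fE]].
- by move=> [/Forall_cons_iff [/f0]].
- move=> x y Ey xy [/Forall_cons_iff [fx _] /Forall_cons_iff [[]]].
  exact: fup fx Ey xy.
- move=> x y [/Forall_cons_iff [fx /Forall_cons_iff [fy _]]].
  by move=> /Forall_cons_iff [[]]; apply: fmul.
- move=> x zs cov [/Forall_cons_iff [fx _] /Forall_Exists_neg []].
  exact: ftight cov.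
Qed.

Lemma avoiding_tight (z : S) (f : X) :
  (forall xs ys, tight_forbidden z xs ys -> ~ pattern xs ys f) ->
  tight E (fun x => f x) /\ f z.
Proof.
move=> avoid; have forbidden xs ys : tight_forbidden z xs ys ->
    Forall (fun x => f x) xs -> Forall (fun y => ~ f y) ys -> False.
  by move=> /avoid nf fxs fys; apply: nf.
have fz : f z.
  by apply: contrapT => nfz; apply: (forbidden _ _ (forbid_point z)); auto.
split=> //; split; last first.
  move=> x zs fx cov; apply: contrapT => /Forall_Exists_neg.
  by apply: (forbidden _ _ (forbid_cover z cov)); auto.
split.
  by move=> x fx; apply: contrapT => /forbid_outside/(forbidden _ _); auto.
split; first by exists z.
split; first by move=> f0; apply: (forbidden _ _ (forbid_zero z)); auto.
split.
  move=> x y fx Ey xy; apply: contrapT => nfy.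
  by apply: (forbidden _ _ (forbid_up z Ey xy)); auto.
move=> x y fx fy; apply: contrapT => nfxy.
by apply: (forbidden _ _ (forbid_mul z x y)); auto.
Qed.

Lemma tight_point_compact (z : S) :
  compact [set f : X | tight E (fun x => f x) /\ f z].
Proof.
have -> : [set f : X | tight E (fun x => f x) /\ f z] =
          [set f | forall xs ys, tight_forbidden z xs ys -> ~ pattern xs ys f].
  apply: funext => f; apply: propext.
  by split=> [[ft fz]|]; [apply: tight_avoids | apply: avoiding_tight].
have closedK := @closed_avoiding (tight_forbidden z).
apply: (subclosed_compact closedK (B := setT)) => //.
have := tychonoff (fun _ : {classic S} => bool_compact).
by congr compact; apply/seteqP; split.
Qed.

Lemma V_compact (z : S) : is_compact E (V E z).
Proof.
move=> I U Uopen Ucover.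
pose W (i : {classic I}) : set X :=
  \bigcup_(p in [set p | incl (basic E p.1 p.2) (U i)]) pattern p.1 p.2.
have Wopen i : setT i -> open (W i).
  by move=> _; apply: bigcup_open => p _; apply: pattern_open.
have tight_W :
    [set f : X | tight E (fun x => f x) /\ f z] `<=` \bigcup_(i in setT) W i.
  move=> f [ft fz]; have [i Ui] := Ucover _ (conj ft fz).
  have [xs [ys [[_ pf] sub]]] := (proj2 (Uopen i)) _ Ui.
  by exists i => //; exists (xs, ys).
have := tight_point_compact (z := z).
rewrite compact_cover => /(_ _ _ _ Wopen tight_W) [D _ DW].
exists (finmap.enum_fset D) => F [Ft Fz].
pose f : X := fun x => `[< F x >].
have fF : (fun x => is_true (f x)) = F.
  by apply: funext => x; exact: (asboolE (F x)).
rewrite -fF in Ft Fz *.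
have [i Di [[xs ys] sub pf]] := DW f (conj Ft Fz).
by exists i; split; [exact: (mem_In Di) | apply: sub].
Qed.

End TightSpectrumCompact.

Section CompactOpenSets.
Variable S : ISG.

Lemma Tc_empty (E : S -> Prop) : Tc E (empty S).
Proof. by split; [split=> F [] | move=> I U _ _; exists [::] => F []]. Qed.

Lemma V_open (E : S -> Prop) (z : S) : is_open E (V E z).
Proof.
split=> [F []|F [Ft Fz]] //; exists [:: z], [::]; split; first by split; auto.
by move=> F' [Ft' [/Forall_cons_iff [] ]].
Qed.

Lemma Tc_V (E : S -> Prop) (z : S) : Tc E (V E z).
Proof. by split; [apply: V_open | apply: V_compact]. Qed.

Variables (G : Group) (P : S -> Prop) (phi : S -> G).

Lemma Tcg_empty (g : G) : Tcg P phi g (empty S).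
Proof. by split; [apply: Tc_empty | move=> I []]. Qed.

Lemma Tcg_V (g : G) (z : S) : Eg P phi g z -> Tcg P phi g (V (Idem P) z).
Proof.
by move=> zg; split=> [|I _ gen]; [apply: Tc_V | apply: gen; exists z].
Qed.

Lemma Eg_range (s : S) :
  subsemi P -> P s -> s <> szero -> Eg P phi (phi s) (smul s (sinv s)).
Proof.
move=> Psub Ps s0; split; first exact: Idem_range.
exists s; do 3!split => //.
exact: idem_nle (mul_sinv_idem s) (mul_sinv_idem s) (mul_sinv_idem s).
Qed.

End CompactOpenSets.

Theorem theorem5p7 (S : ISG) (G : Group) (S1 : S -> Prop) (phi : S -> G)
  (hgr : grading phi)
  (hc : cover_sub S1)
  (hyp : forall x y s, Idem S1 x -> Idem S1 y ->
           exists s', S1 s' /\ nle (smul (smul x s) y) s')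
  (iota : fsets S -> fsets S) (hiota : is_iota S1 iota) :
  forall (g : G) (h : fsets S -> fsets S), is_phitilde phi g h ->
  forall x y a, Idem S1 x -> Idem S1 y -> Eg (full S) phi (ginv g) a ->
  exists Z, Tcg S1 phi g Z /\
    incl (inter (V (Idem (full S)) x)
                (h (inter (V (Idem (full S)) y) (V (Idem (full S)) a))))
         (iota Z).
Proof.
move=> g h [_ h_V] x y a Hx Hy [Ha [t [_ [t0 [tg a_le]]]]].
have [[xx yy] aa] := (proj2 Hx, proj2 Hy, proj2 Ha).
set s := sinv t.
have s0 : s <> szero := sinv_neq0 t0.
have phis : phi s = g by rewrite grading_sinv // tg ginvK.
have ya_le : nle (smul y a) (smul (sinv s) s) by rewrite sinvK; apply: nle_mull.
set p := smul (smul s (smul y a)) (sinv s).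
have p_idem : smul p p = p := idem_conj s (idemM yy aa).
rewrite (V_mul (conj I yy) Ha) (h_V _ _ (conj I (idemM yy aa)) s0 phis ya_le).
rewrite -/p (V_mul (conj I xx) (conj I p_idem)).
have xp_split : smul x p = smul (smul (smul x s) y) (smul a (sinv s)).
  by rewrite /p -!smulA.
have [s' [S1s' xsy_le]] := hyp x y s Hx Hy.
case: (pselect (smul (smul x s) y = szero)) => [xsy0 | xsy_neq0].
  exists (empty S); split; first exact: Tcg_empty.
  by rewrite xp_split xsy0 smul0l => F /V_szero.
have phis' : phi s' = g.
  by rewrite (grading_nle hgr xsy_le xsy_neq0) grading_idem_sandwich.
have range_s' := Idem_range (proj1 hc) S1s'.
exists (V (Idem S1) (smul s' (sinv s'))); split.
  rewrite -phis'; apply: Tcg_V.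
  exact: Eg_range (proj1 hc) S1s' (nle_neq0 xsy_le xsy_neq0).
rewrite (proj2 (proj2 hiota) _ range_s').
apply: V_incl; first exact: (conj I (mul_sinv_idem s')).
by rewrite xp_split; apply: nle_range xsy_le _; rewrite -xp_split; apply: idemM.
Qed.
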